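(* Let $\mathfrak g$ be a nonsemisimple complex Lie algebra, $\mathfrak p$ a nonperfect ideal of $\mathfrak g$, and $\phi:\mathfrak p\to\mathbb C$ a Lie algebra homomorphism. If $\mathfrak g$ admits a bland irreducible quasi-Whittaker module of type $\phi$, then $\phi$ is extendable.
   Context: A Lie algebra homomorphism to $\mathbb C$ is a linear map vanishing on the derived subalgebra. For a $\mathfrak g$-module $V$, $V_\phi=\{v\in V: pv=\phi(p)v\ \forall p\in\mathfrak p\}$ (quasi-Whittaker vectors of type $\phi$); $V$ is a quasi-Whittaker module of type $\phi$ if generated by an element of $V_\phi$; an irreducible such $V$ is bland if $\dim V_\phi=1$. The Whittaker annihilator is $\mathfrak g^{\phi}=\{g\in\mathfrak g:\phi([g,p])=0\ \forall p\in\mathfrak p\}$. $\phi$ is extendable if there is a Lie algebra homomorphism $\phi':\mathfrak g^\phi\to\mathbb C$ with $\phi'|_{\mathfrak p}=\phi$. *)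

(* Complex numbers are R[i] (mathcomp-real-closed) for a
   realType R; Lie algebras are finite-dimensional vector spaces (vectType)
   with a bracket; modules are arbitrary (possibly infinite-dimensional)
   lmodTypes. *)
From HB Require Import structures.
From mathcomp Require Import all_boot all_order all_algebra.
From mathcomp Require Import reals complex.
Set Implicit Arguments. Unset Strict Implicit. Unset Printing Implicit Defensive.
Import Order.TTheory GRing.Theory Num.Theory.
Local Open Scope ring_scope.

Section LieDefs.
Variable K : fieldType.

Definition lie_bracket (g : lmodType K) (br : g -> g -> g) : Prop :=
  [/\ (forall (a : K) (x y z : g), br (a *: x + y) z = a *: br x z + br y z),
      (forall (a : K) (x y z : g), br z (a *: x + y) = a *: br z x + br z y),
      (forall x : g, br x x = 0) &
      (forall x y z : g, br x (br y z) + br y (br z x) + br z (br x y) = 0)].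

Variable g : vectType K.
Variable br : g -> g -> g.

(* the derived subspace [U,U] = span of all brackets of elements of U
   (by bilinearity it is spanned by brackets of basis vectors) *)
Definition derived (U : {vspace g}) : {vspace g} :=
  <<allpairs br (vbasis U) (vbasis U)>>%VS.

Definition is_ideal (I : {vspace g}) : Prop :=
  forall x y : g, y \in I -> br x y \in I.

Definition derived_series (I : {vspace g}) (k : nat) : {vspace g} :=
  iter k derived I.

Definition solvable_ideal (I : {vspace g}) : Prop :=
  exists k : nat, derived_series I k = 0%VS.

Definition semisimple : Prop :=
  forall I : {vspace g}, is_ideal I -> solvable_ideal I -> I = 0%VS.

Definition perfect (U : {vspace g}) : Prop := derived U = U.

Definition lie_hom_to_field (U : {vspace g}) (f : {linear subvs_of U -> K^o}) : Prop :=
  forall x : subvs_of U, vsval x \in derived U -> f x = 0.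

Definition is_whittaker_annihilator (P : {vspace g})
    (phi : {linear subvs_of P -> K^o}) (G : {vspace g}) : Prop :=
  forall x : g, x \in G <->
    (forall p : subvs_of P, phi (vsproj P (br x (vsval p))) = 0).

Definition extendable (P : {vspace g}) (phi : {linear subvs_of P -> K^o}) : Prop :=
  exists G : {vspace g}, is_whittaker_annihilator phi G /\
  exists phi' : {linear subvs_of G -> K^o},
    lie_hom_to_field phi' /\
    (forall p : subvs_of P, phi' (vsproj G (vsval p)) = phi p).

Variable V : lmodType K.
Variable act : g -> V -> V.

Definition lie_module : Prop :=
  [/\ (forall (a : K) (x y : g) (v : V), act (a *: x + y) v = a *: act x v + act y v),
      (forall (a : K) (x : g) (v w : V), act x (a *: v + w) = a *: act x v + act x w) &
      (forall (x y : g) (v : V), act (br x y) v = act x (act y v) - act y (act x v))].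

Definition submodule (S : V -> Prop) : Prop :=
  [/\ S 0,
      (forall (a : K) (v w : V), S v -> S w -> S (a *: v + w)) &
      (forall (x : g) (v : V), S v -> S (act x v))].

Definition irreducible_module : Prop :=
  (exists v : V, v <> 0) /\
  forall S : V -> Prop, submodule S -> (forall v, S v -> v = 0) \/ (forall v, S v).

Definition generates (w : V) : Prop :=
  forall S : V -> Prop, submodule S -> S w -> forall v, S v.

Variable P : {vspace g}.
Variable phi : {linear subvs_of P -> K^o}.

Definition qw_vector (v : V) : Prop :=
  forall p : subvs_of P, act (vsval p) v = phi p *: v.

Definition quasi_whittaker_module : Prop :=
  exists w : V, qw_vector w /\ generates w.

Definition qw_space_dim1 : Prop :=
  exists w : V, w <> 0 /\ qw_vector w /\
    forall v : V, qw_vector v -> exists c : K, v = c *: w.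

Definition bland_irreducible_qw_module : Prop :=
  [/\ irreducible_module, quasi_whittaker_module & qw_space_dim1].
End LieDefs.

From HB Require Import structures.
From mathcomp Require Import all_boot all_order all_algebra.
From mathcomp Require Import reals complex.
Import GRing.Theory.
Local Open Scope ring_scope.
Set Implicit Arguments. Unset Strict Implicit. Unset Printing Implicit Defensive.

(* Let w span V_phi.  For x in g^phi and p in P,
   p (x w) = [p,x] w + x (p w) = phi([p,x]) w + phi(p) x w = phi(p) x w,
   since [p,x] lies in the ideal P and phi([p,x]) = 0.  Hence x w lies in V_phi,
   i.e. x w = c(x) w.  The map c is linear, kills brackets because
   x y w = c(x) c(y) w = y x w, and agrees with phi on P, which lies in g^phi
   because phi kills [P,P]. *)

Section LinearFunctions.
Variables (K : fieldType) (U W : lmodType K).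

Definition pack_linear (f : U -> W) (f_lin : linear f) : {linear U -> W} :=
  HB.pack f (GRing.isLinear.Build K U W *:%R f f_lin).

Lemma linear_sumZ (f : U -> W) (f_lin : linear f) n (a : 'I_n -> K) (v : 'I_n -> U) :
  f (\sum_i a i *: v i) = \sum_i a i *: f (v i).
Proof.
rewrite -[f _]/(pack_linear f_lin _) linear_sum.
by apply: eq_bigr => i _; rewrite linearZ.
Qed.

Lemma scalel_inj (w : W) : w != 0 -> injective (fun a : K => a *: w).
Proof.
move=> w_neq0 a b /eqP; rewrite -subr_eq0 -scalerBl scaler_eq0 (negPf w_neq0).
by rewrite orbF subr_eq0 => /eqP.
Qed.

End LinearFunctions.

Section LieAlgebra.
Variables (K : fieldType) (g : vectType K) (br : g -> g -> g).
Hypothesis hbr : lie_bracket br.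

Lemma brl_linear z : linear (br^~ z).
Proof. by case: hbr => brDl _ _ _ a x y; apply: brDl. Qed.

Lemma brr_linear z : linear (br z).
Proof. by case: hbr => _ brDr _ _ a x y; apply: brDr. Qed.

Lemma br_anticomm x y : br y x = - br x y.
Proof.
case: hbr => _ _ brxx _; apply/eqP; rewrite -addr_eq0 addrC.
have := brxx (x + y).
rewrite -[br _ _]/(pack_linear (brl_linear _) _) linearD /=.
rewrite -[br x _]/(pack_linear (brr_linear _) _) -[br y _]/(pack_linear (brr_linear _) _).
by rewrite !linearD /= !brxx add0r addr0 => ->.
Qed.

Lemma mem_derived (U : {vspace g}) x y :
  x \in U -> y \in U -> br x y \in derived br U.
Proof.
move=> xU yU; rewrite (coord_vbasis xU) (linear_sumZ (brl_linear y)).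
apply: memv_suml => i _; rewrite (coord_vbasis yU) (linear_sumZ (brr_linear _)).
apply: memvZ; apply: memv_suml => j _.
by apply/memvZ/memv_span/allpairs_f; rewrite mem_nth ?size_tuple.
Qed.

Lemma derived_linear_eq0 (W : lmodType K) (f : g -> W) (U : {vspace g}) :
  linear f -> {in U &, forall x y, f (br x y) = 0} ->
  {in derived br U, forall x, f x = 0}.
Proof.
move=> f_lin f_br x; rewrite /derived; set s := allpairs _ _ _ => xs.
rewrite (coord_span (X := in_tuple s) xs) (linear_sumZ f_lin) big1 // => i _.
have /allpairsP[[b1 b2] /= [b1U b2U ->]] : (in_tuple s)`_i \in s.
  by rewrite mem_nth.
by rewrite f_br ?scaler0 ?(vbasis_mem b1U) ?(vbasis_mem b2U).
Qed.

Section WhittakerAnnihilator.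
Variables (P : {vspace g}) (phi : {linear subvs_of P -> K^o}).

Definition whittaker_form (x : g) : 'rV[K]_(\dim P) :=
  \row_i (phi (vsproj P (br x (vbasis P)`_i)) : K).

Lemma whittaker_form_linear : linear whittaker_form.
Proof.
move=> a x y; apply/rowP => i; rewrite !mxE.
have brE u : br u (vbasis P)`_i = pack_linear (brl_linear (vbasis P)`_i) u by [].
by rewrite brE !linearP.
Qed.

Definition whittaker_annihilator : {vspace g} :=
  lker (linfun (pack_linear whittaker_form_linear)).

Lemma whittaker_annihilatorP : is_whittaker_annihilator br phi whittaker_annihilator.
Proof.
move=> x; rewrite memv_ker lfunE /=; split=> [/eqP/rowP phi_basis p | phi_P].
  rewrite (coord_vbasis (subvsP p)) (linear_sumZ (brr_linear _)) !linear_sum.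
  apply: big1 => i _; rewrite !linearZ /=.
  by have := phi_basis i; rewrite !mxE => ->; rewrite scaler0.
apply/eqP/rowP => i; rewrite !mxE.
have := phi_P (vsproj P (vbasis P)`_i).
by rewrite vsprojK // vbasis_mem ?mem_nth ?size_tuple.
Qed.

Lemma ideal_sub_whittaker_annihilator :
  is_ideal br P -> lie_hom_to_field br phi -> (P <= whittaker_annihilator)%VS.
Proof.
move=> P_ideal phi_hom; apply/subvP => x xP; apply/whittaker_annihilatorP => p.
by apply: phi_hom; rewrite vsprojK ?P_ideal ?mem_derived ?subvsP.
Qed.

End WhittakerAnnihilator.
End LieAlgebra.

Section Modules.
Variables (K : fieldType) (g : vectType K) (br : g -> g -> g).
Variables (V : lmodType K) (act : g -> V -> V).
Hypothesis hmod : lie_module br act.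

Lemma actl_linear v : linear (act^~ v).
Proof. by case: hmod => actDl _ _ a x y; apply: actDl. Qed.

Lemma actr_linear x : linear (act x).
Proof. by case: hmod => _ actDr _ a v w; apply: actDr. Qed.

Lemma actZ x (a : K) v : act x (a *: v) = a *: act x v.
Proof. exact: (GRing.scalable_linear (actr_linear x)). Qed.

Lemma act_br x y v : act (br x y) v = act x (act y v) - act y (act x v).
Proof. by case: hmod => _ _ ->. Qed.

Section CommonEigenvector.
Variables (G : {vspace g}) (w : V).
Hypothesis w_neq0 : w != 0.
Hypothesis w_eigen : {in G, forall x, exists a : K, act x w = a *: w}.

Lemma eigenvalue_exists (x : subvs_of G) : exists a : K, act (vsval x) w == a *: w.
Proof. by have [a ->] := w_eigen (subvsP x); exists a. Qed.

Definition eigenchar (x : subvs_of G) : K^o := xchoose (eigenvalue_exists x).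

Lemma eigencharE x : act (vsval x) w = eigenchar x *: w.
Proof. exact/eqP/(xchooseP (eigenvalue_exists x)). Qed.

Lemma eigenchar_linear : linear eigenchar.
Proof.
move=> a x y; apply: (scalel_inj w_neq0).
by rewrite -eigencharE linearP (actl_linear w) !eigencharE scalerDl scalerA.
Qed.

Lemma eigenchar_lie_hom : lie_hom_to_field br (pack_linear eigenchar_linear).
Proof.
move=> x x_der; apply: (scalel_inj w_neq0); rewrite /= -eigencharE scale0r.
apply: (derived_linear_eq0 (actl_linear w) _ x_der) => y z yG zG.
have [b yE] := w_eigen yG; have [c zE] := w_eigen zG.
by rewrite act_br zE yE !actZ yE zE !scalerA mulrC subrr.
Qed.

End CommonEigenvector.

Lemma qw_vector_act (hbr : lie_bracket br)
    (P : {vspace g}) (phi : {linear subvs_of P -> K^o}) w x :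
  is_ideal br P -> qw_vector act phi w ->
  x \in whittaker_annihilator hbr phi -> qw_vector act phi (act x w).
Proof.
move=> P_ideal w_qw /whittaker_annihilatorP x_ann p.
have px_P : br (vsval p) x \in P by rewrite br_anticomm // rpredN P_ideal ?subvsP.
have phi_px : phi (vsproj P (br (vsval p) x)) = 0.
  by rewrite br_anticomm // !linearN /= x_ann oppr0.
have := act_br (vsval p) x w; rewrite -(vsprojK px_P) w_qw phi_px.
by rewrite scale0r w_qw actZ => /eqP; rewrite eq_sym subr_eq0 => /eqP.
Qed.

End Modules.

Theorem lemma3p6 (R : realType) (g : vectType R[i]) (br : g -> g -> g)
  (P : {vspace g}) (phi : {linear subvs_of P -> R[i]^o})
  (V : lmodType R[i]) (act : g -> V -> V) :
  lie_bracket br ->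
  ~ semisimple br ->
  is_ideal br P ->
  ~ perfect br P ->
  lie_hom_to_field br phi ->
  lie_module br act ->
  bland_irreducible_qw_module act phi ->
  extendable br phi.
Proof.
move=> hbr _ P_ideal _ phi_hom hmod [_ _ [w [/eqP w_neq0 [w_qw w_unique]]]].
set G := whittaker_annihilator hbr phi.
have w_eigen : {in G, forall x, exists a, act x w = a *: w}.
  move=> x xG; exact: w_unique (qw_vector_act hmod P_ideal w_qw xG).
exists G; split; first exact: whittaker_annihilatorP.
exists (pack_linear (eigenchar_linear hmod w_neq0 w_eigen)).
split; first exact: eigenchar_lie_hom.
move=> p; have pG : vsval p \in G.
  exact: subvP (ideal_sub_whittaker_annihilator hbr P_ideal phi_hom) _ (subvsP p).
by apply: (scalel_inj w_neq0); rewrite /= -eigencharE vsprojK.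
Qed.
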